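(* Let $0 \le \tilde{p} \leq p \le 1$. Consider $\mathrm{USD}_p$ in configuration $\mathbf{x}(t)$ and $\mathrm{USD}_{\tilde{p}}$ in configuration $\tilde{\mathbf{x}}(t)$ with $\mathbf{x}(t) \succeq_C \tilde{\mathbf{x}}(t)$. Then there exists a bijection $b: [n]^2\times(0,1] \to [n]^2\times(0,1]$ between the random choices of the two schedulers such that, if $\mathrm{USD}_p$ performs its interaction with random choice $\omega$ and $\mathrm{USD}_{\tilde{p}}$ with random choice $b(\omega)$, then $\mathbf{x}(t+1) \succeq_C \tilde{\mathbf{x}}(t+1)$.
   Context: Population protocol with $n$ agents labeled $1,\dots,n$, each in a state from $Q=\{1,2,\bot\}$ (Opinion 1, Opinion 2, undecided). In each interaction the scheduler draws $(i,j,r) \in [n]^2\times(0,1]$ uniformly at random: $i$ is the initiator, $j$ the responder, and only the initiator changes state. In $\mathrm{USD}_p$: if the initiator is $2$ and the responder $1$, the initiator becomes $\bot$; if the initiator is $1$ and the responder $2$, the initiator stays $1$ if $r\le p$ and becomes $\bot$ otherwise; if the initiator is $\bot$, it adopts the responder's state; otherwise nothing changes. A configuration $(x_1,x_2,u)$ counts the agents in states $1,2,\bot$. The states are ordered by $1 \succeq_Q \bot \succeq_Q 2$, and for configurations $\mathbf{x}=(x_1,x_2,u)$, $\tilde{\mathbf{x}}=(\tilde{x}_1,\tilde{x}_2,\tilde{u})$ we write $\mathbf{x}\succeq_C\tilde{\mathbf{x}}$ if $x_1\ge\tilde{x}_1$ and $x_1+u\ge\tilde{x}_1+\tilde{u}$.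 At time $t$ the agents in each process are labeled so that their states are sorted: $q_i(t)\succeq_Q q_{i+1}(t)$ and $\tilde{q}_i(t)\succeq_Q\tilde{q}_{i+1}(t)$ for all $i\in[n-1]$. *)

From mathcomp Require Import all_boot all_order all_algebra.
From mathcomp Require Import reals.
Set Implicit Arguments. Unset Strict Implicit. Unset Printing Implicit Defensive.
Import Order.TTheory GRing.Theory Num.Theory.
Local Open Scope ring_scope.

Inductive Q := One | Two | Und.

Definition qrank (a : Q) : nat := match a with One => 2 | Und => 1 | Two => 0 end.
Definition qge (a b : Q) : bool := (qrank b <= qrank a)%N.

(* Agents are labeled by 'I_n (0-based version of 1..n). *)
Definition sorted_states (n : nat) (q : 'I_n -> Q) : Prop :=
  forall i j : 'I_n, (i <= j)%N -> qge (q i) (q j).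

Definition is_one (a : Q) : bool := if a is One then true else false.
Definition is_two (a : Q) : bool := if a is Two then true else false.
Definition is_und (a : Q) : bool := if a is Und then true else false.

Definition config (n : nat) (q : 'I_n -> Q) : nat * nat * nat :=
  (#|[pred i | is_one (q i)]|, #|[pred i | is_two (q i)]|, #|[pred i | is_und (q i)]|).

Definition confge (x xt : nat * nat * nat) : Prop :=
  let: (x1, _, u) := x in let: (y1, _, v) := xt in
  (y1 <= x1)%N /\ (y1 + v <= x1 + u)%N.

Definition Omega (R : realType) (n : nat) : Type :=
  ('I_n * 'I_n * {r : R | (0 < r) && (r <= 1)})%type.

(* New state of the initiator in USD_p, given initiator state a, responder state b. *)
Definition usd_new (R : realType) (p r : R) (a b : Q) : Q :=
  match a, b with
  | Two, One => Und
  | One, Two => if r <= p then One else Und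
  | Und, s => s
  | s, _ => s
  end.

Definition usd_step (R : realType) (n : nat) (p : R) (q : 'I_n -> Q)
    (w : Omega R n) : 'I_n -> Q :=
  let: (i, j, r) := w in
  fun k => if k == i then usd_new p (sval r) (q i) (q j) else q k.

From mathcomp Require Import all_boot all_order all_algebra.
From mathcomp Require Import reals.
Import Order.TTheory GRing.Theory Num.Theory.
Local Open Scope ring_scope.
Set Implicit Arguments. Unset Strict Implicit.

(* For sorted state vectors, the agents whose state has rank at least m
   (in the order 2 < bot < 1) form an initial segment of the labels, whose
   length is x1 for m = 2 and x1 + u for m = 1.  Hence x >=_C xt says exactly
   that, label by label, the first process is in a >=_Q state.  The USD update
   is monotone in the initiator's state, the responder's state and p, so the
   identity coupling preserves this labelwise domination, which in turn gives
   >=_C after the step. *)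

Lemma card_ord_lt n m : (m <= n)%N -> #|[pred j : 'I_n | (j < m)%N]| = m.
Proof.
move=> le_mn; have widen_inj : injective (widen_ord le_mn).
  by move=> x y /(congr1 val) eq_xy; apply: val_inj.
rewrite -[RHS]card_ord -(card_imset _ widen_inj).
apply: eq_card => j; rewrite inE.
apply/idP/imsetP => [lt_jm | [k _ ->] /=]; last exact: ltn_ord.
by exists (Ordinal lt_jm); last by apply: val_inj.
Qed.

Lemma downclosed_mem_ltn_card n (P : pred 'I_n) :
  (forall i j : 'I_n, (j <= i)%N -> P i -> P j) ->
  forall i : 'I_n, P i = (i < #|P|)%N.
Proof.
move=> downP i; apply/idP/idP => [Pi | lt_iP].
- rewrite -(card_ord_lt (ltn_ord i)); apply: subset_leq_card.
  by apply/subsetP => j; rewrite inE ltnS => /downP; apply.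
- apply: contraLR lt_iP => notPi; rewrite -leqNgt -(card_ord_lt (ltnW (ltn_ord i))).
  apply: subset_leq_card; apply/subsetP => j Pj; rewrite inE ltnNge.
  by apply: contra notPi => /downP; apply.
Qed.

Definition at_least n (q : 'I_n -> Q) (m : nat) := [pred i | (m <= qrank (q i))%N].

Lemma card_is_one n (q : 'I_n -> Q) : #|[pred i | is_one (q i)]| = #|at_least q 2|.
Proof. by apply: eq_card => i; rewrite !inE; case: (q i). Qed.

Lemma card_is_one_is_und n (q : 'I_n -> Q) :
  (#|[pred i | is_one (q i)]| + #|[pred i | is_und (q i)]|)%N = #|at_least q 1|.
Proof.
rewrite -cardUI (@eq_card0 _ (predI _ _)) ?addn0; last first.
  by move=> i; rewrite !inE; case: (q i).
by apply: eq_card => i; rewrite !inE; case: (q i).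
Qed.

Lemma sorted_at_least_downclosed n (q : 'I_n -> Q) m : sorted_states q ->
  forall i j : 'I_n, (j <= i)%N -> at_least q m i -> at_least q m j.
Proof. by move=> sorted_q i j le_ji; rewrite !inE => /leq_trans; apply; apply: sorted_q. Qed.

Definition agentwise_ge n (q qt : 'I_n -> Q) := forall k, qge (q k) (qt k).

Lemma agentwise_ge_at_least n (q qt : 'I_n -> Q) m :
  agentwise_ge q qt -> {subset at_least qt m <= at_least q m}.
Proof. by move=> ge_q k; rewrite !inE => /leq_trans; apply; apply: ge_q. Qed.

Lemma agentwise_ge_confge n (q qt : 'I_n -> Q) :
  agentwise_ge q qt -> confge (config q) (config qt).
Proof.
move=> ge_q; rewrite /config /confge !card_is_one_is_und !card_is_one.
by split; apply/subset_leq_card/subsetP; apply: agentwise_ge_at_least.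
Qed.

Lemma sorted_at_least_ltn_card n (q : 'I_n -> Q) m : sorted_states q ->
  forall k : 'I_n, (k \in at_least q m) = (k < #|at_least q m|)%N.
Proof. by move=> sorted_q; apply/downclosed_mem_ltn_card/sorted_at_least_downclosed. Qed.

Lemma sorted_at_least_subset n (q qt : 'I_n -> Q) m :
  sorted_states q -> sorted_states qt -> (#|at_least qt m| <= #|at_least q m|)%N ->
  {subset at_least qt m <= at_least q m}.
Proof.
move=> sorted_q sorted_qt le_card k.
by rewrite !sorted_at_least_ltn_card // => /leq_trans; apply.
Qed.

Lemma sorted_confge_agentwise_ge n (q qt : 'I_n -> Q) :
  sorted_states q -> sorted_states qt ->
  confge (config q) (config qt) -> agentwise_ge q qt.
Proof.
rewrite /config /confge !card_is_one_is_und !card_is_one => sorted_q sorted_qt [ge2 ge1] k.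
have [sub2 sub1] := (sorted_at_least_subset sorted_q sorted_qt ge2,
                     sorted_at_least_subset sorted_q sorted_qt ge1).
rewrite /qge; case E: (qt k) => //=.
- by have := sub2 k; rewrite !inE E; apply.
- by have := sub1 k; rewrite !inE E; apply.
Qed.

Lemma usd_new_mono (R : realType) (p pt r : R) (a b a' b' : Q) : pt <= p ->
  qge a a' -> qge b b' -> qge (usd_new p r a b) (usd_new pt r a' b').
Proof.
move=> le_ptp; case: a; case: a' => //; case: b; case: b' => //= _ _.
all: have [r_le_pt | _] := boolP (r <= pt); last by case: (r <= p).
all: by rewrite ?(le_trans r_le_pt le_ptp).
Qed.

Lemma usd_step_agentwise_ge (R : realType) n (p pt : R) (q qt : 'I_n -> Q) :
  pt <= p -> agentwise_ge q qt ->
  forall w : Omega R n, agentwise_ge (usd_step p q w) (usd_step pt qt w).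
Proof. by move=> le_ptp ge_q [[i j] r] k /=; case: ifP => _; first exact: usd_new_mono. Qed.

Theorem lemma5 (R : realType) (n : nat) (p pt : R)
    (hpt0 : 0 <= pt) (hptp : pt <= p) (hp1 : p <= 1)
    (q qt : 'I_n -> Q)
    (hq : sorted_states q) (hqt : sorted_states qt)
    (hdom : confge (config q) (config qt)) :
  exists b : Omega R n -> Omega R n,
    bijective b /\
    forall w : Omega R n,
      confge (config (usd_step p q w)) (config (usd_step pt qt (b w))).
Proof.
exists id; split; first by exists id.
move=> w; apply: agentwise_ge_confge; apply: usd_step_agentwise_ge hptp _ w.
exact: sorted_confge_agentwise_ge.
Qed.
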